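(* If $G$ is a planar ribbon graph, then the action $\beta_v$ of $\operatorname{Pic}^0(G)$ on $S(G)$ is independent of the vertex $v$, and hence defines a canonical action $\beta$ of $\operatorname{Pic}^0(G)$ on $S(G)$.
   Context: A graph means a finite connected multigraph without loop edges; a ribbon graph is a graph with a cyclic ordering of the edges around each vertex. A ribbon graph is planar if it can be embedded in $\mathbb{R}^2$ without crossings so that the cyclic orderings are those induced by the counterclockwise orientation of the plane (equivalently, the closed orientable surface determined by the ribbon structure has genus $0$). $S(G)$ is the set of spanning trees. Divisors are formal integer combinations of vertices. For $f : V(G) \to \mathbb{Z}$, $\Delta f = \sum_{u} \big(\sum_{\text{edges } uw} (f(u)-f(w))\big)(u)$; $D \sim D'$ if $D - D' = \Delta f$ for some $f$. $\operatorname{Pic}^d(G)$ is the set of linear equivalence classes of degree-$d$ divisors; $\operatorname{Pic}^0(G)$ is a group. The genus is $g = |E(G)|-|V(G)|+1$. For a spanning tree $T$ with non-tree edges $e_1,\dots,e_g$, a $T$-break divisor is $\sum_i (v_i)$ with $v_i$ an endpoint of $e_i$; $B(G)$ is the set of all such (over all $T$). Every class in $\operatorname{Pic}^g(G)$ contains exactly one element of $B(G)$, and $\operatorname{Pic}^0(G)$ acts on $B(G)$ by $\gamma \cdot D :=$ the unique break divisor linearly equivalent to $D + \gamma$. Bernardi map: for a vertex $v$, an edge $e$ incident to $v$, and a spanning tree $T$, the tour starts at $v$ and examines edges at $v$ in cyclic order starting with $e$; at a current vertex $u$, an examined edge $f \notin T$ is ''cut through'' from $u$ and the next edge at $u$ is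 examined, while an examined edge $f \in T$ is walked along to its other endpoint $u'$, after which the edges at $u'$ are examined in cyclic order starting with the edge after $f$. The tour ends when each tree edge has been traversed in both directions. For $f \notin T$, $\eta_{(v,e)}(f)$ is the endpoint from which $f$ is first cut through, and $\beta_{(v,e)}(T) = \sum_{f \notin T} (\eta_{(v,e)}(f))$; $\beta_{(v,e)} : S(G) \to B(G)$ is a bijection. The action $\beta_v$ is $\gamma \cdot T := \beta_{(v,e)}^{-1}(\gamma \cdot \beta_{(v,e)}(T))$ for any edge $e$ incident to $v$ (independent of $e$). *)

From mathcomp Require Import all_boot all_order all_algebra all_fingroup.
Set Implicit Arguments. Unset Strict Implicit. Unset Printing Implicit Defensive.
Import GRing.Theory Num.Theory.

Local Open Scope ring_scope.
Section RibbonGraphs.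
Variables (V E : finType) (ends : E -> V * V).

(** A multigraph: vertex set V, edge set E, each edge e joins ends e = (a, b).
    Darts (half-edges): (e, true) sits at (ends e).1, (e, false) at (ends e).2. *)
Definition dart := (E * bool)%type.
Definition tail (d : dart) : V := if d.2 then (ends d.1).1 else (ends d.1).2.
Definition alpha (d : dart) : dart := (d.1, ~~ d.2).

Definition loopless : Prop := forall e : E, (ends e).1 != (ends e).2.

Definition incident (v : V) (e : E) : bool := ((ends e).1 == v) || ((ends e).2 == v).

Definition adj (S : {set E}) : rel V :=
  fun u w => [exists e in S, (ends e == (u, w)) || (ends e == (w, u))].

Definition connected_graph : Prop := forall u w : V, connect (adj [set: E]) u w.

Definition spanning_tree (T : {set E}) : Prop :=
  (forall u w : V, connect (adj T) u w) /\
  (forall e, e \in T -> ~~ connect (adj (T :\ e)) (ends e).1 (ends e).2).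

(** ribbon structure: sigma d is the next dart (counterclockwise) around tail d,
    and the darts at each vertex form a single sigma-cycle. *)
Definition ribbon (sigma : {perm dart}) : Prop :=
  (forall d, tail (sigma d) = tail d) /\
  (forall d d', tail d = tail d' -> fconnect sigma d d').

(** faces are the orbits of sigma o alpha; planar = genus 0, i.e.
    V - E + F = 2 (Euler characteristic of the associated closed surface). *)
Definition nfaces (sigma : {perm dart}) : nat := fcard (fun d => sigma (alpha d)) predT.
Definition planar (sigma : {perm dart}) : Prop :=
  (#|V| + nfaces sigma = #|E| + 2)%N.

Definition divisor := V -> int.
Definition deg (D : divisor) : int := \sum_(u : V) D u.
Definition laplacian (f : V -> int) : divisor := fun u =>
  \sum_(e : E) (if (ends e).1 == u then f u - f (ends e).2
                else if (ends e).2 == u then f u - f (ends e).1 else 0).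
Definition lin_equiv (D D' : divisor) : Prop :=
  exists f : V -> int, forall u, D u - D' u = laplacian f u.
Definition add_div (D D' : divisor) : divisor := fun u => D u + D' u.

Variable sigma : {perm dart}.
Definition start_dart (v : V) (e : E) : dart := (e, (ends e).1 == v).
(* non-tree dart: cut through, examine next edge at the same vertex;
   tree dart: walk to the other end, examine the edge after it there. *)
Definition tour_step (T : {set E}) (d : dart) : dart :=
  if d.1 \in T then sigma (alpha d) else sigma d.
Definition tour (T : {set E}) (v : V) (e : E) : seq dart :=
  traject (tour_step T) (start_dart v e) #|{: dart}|.
(** eta(f): endpoint from which f is first cut through *)
Definition eta (T : {set E}) (v : V) (e : E) (f : E) : V :=
  let s := tour T v e in tail (nth (start_dart v e) s (find (fun d : dart => d.1 == f) s)).
Definition bernardi (T : {set E}) (v : V) (e : E) : divisor := fun u =>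
  (#|[set f | (f \notin T) && (eta T v e f == u)]|)%:Z.

(** the action beta_v: [beta_act v e gamma T T1] means  gamma . T = T1, i.e.
    beta_(v,e)(T1) is the break divisor linearly equivalent to beta_(v,e)(T) + gamma *)
Definition beta_act (v : V) (e : E) (gamma : divisor) (T T1 : {set E}) : Prop :=
  lin_equiv (bernardi T1 v e) (add_div (bernardi T v e) gamma).

End RibbonGraphs.

From mathcomp Require Import all_boot all_order all_algebra all_fingroup.
From mathcomp Require Import zify ring.
Set Implicit Arguments. Unset Strict Implicit. Unset Printing Implicit Defensive.
Import GRing.Theory Num.Theory.

(* The Bernardi tour of [T] is the permutation [(flip on T) * sigma] of the
   darts.  Each tree edge merges two of its cycles, so for a spanning tree it
   is a single cycle; for a planar ribbon graph, by Euler's formula, adding a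
   non-tree edge to [T] splits it into exactly two cycles, the two darts of any
   further edge lying on the same one.
   Hence moving the start dart of the tour one step, around a vertex or across
   an edge [s], changes the Bernardi divisor of every tree by the same dipole
   [(tail s) - (head s)] up to a principal divisor (the indicator of a side
   of a cut).  As the graph is connected, [beta_s(T) - beta_s'(T)] is thus,
   up to linear equivalence, independent of [T].  So if [beta_s(T1)] and
   [beta_s'(T2)] are equivalent to [beta_s(T) + gamma] and [beta_s'(T) + gamma],
   then [beta_s'(T1)] and [beta_s'(T2)] are equivalent Bernardi divisors,
   hence equal (a break-divisor counting argument on the top level set of a
   potential), and [T1 = T2] by injectivity of [beta_s']. *)

Lemma porbit_fconnect (T : finType) (p : {perm T}) x y :
  (y \in porbit p x) = fconnect p x y.
Proof.
apply/porbitP/idP => [[i ->] | H]; first by rewrite permX; apply: fconnect_iter.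
by exists (findex p x y); rewrite permX iter_findex.
Qed.

Lemma perm_fconnect_sym (T : finType) (p : {perm T}) : connect_sym (frel p).
Proof. by move=> x y; apply: fconnect_sym; apply: perm_inj. Qed.

Lemma card_porbits_fcard (T : finType) (p : {perm T}) :
  #|porbits p| = fcard p predT.
Proof.
have -> : porbits p = porbit p @: [set x | froots p x].
  apply/setP => P; apply/imsetP/imsetP => [[x _ ->] | [x _ ->]]; last by exists x.
  exists (froot p x); first by rewrite inE; apply: roots_root; apply: perm_fconnect_sym.
  apply/eqP; rewrite eq_porbit_mem porbit_fconnect perm_fconnect_sym.
  exact: connect_root.
rewrite card_in_imset; first by apply: eq_card => x; rewrite !inE andbT.
move=> x y; rewrite !inE => rx ry /eqP; rewrite eq_porbit_mem porbit_fconnect => H.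
rewrite -(eqP rx) -(eqP ry); apply/fingraph.rootP; first exact: perm_fconnect_sym.
by rewrite perm_fconnect_sym.
Qed.

Lemma porbit_step (T : finType) (s : {perm T}) y z :
  z \in porbit s y -> s z \in porbit s y.
Proof.
by rewrite !porbit_fconnect => H; apply: connect_trans H _; apply: fconnect1.
Qed.

Lemma porbit_eq (T : finType) (s : {perm T}) x y :
  y \in porbit s x -> porbit s y = porbit s x.
Proof. by rewrite -eq_porbit_mem => /eqP. Qed.

Section CyclicPerm.
Variables (T : finType) (pi : {perm T}).
Hypothesis pi_cyclic : forall x y, y \in porbit pi x.
Local Notation N := #|T|.

Definition pos (s z : T) := index z (traject pi s N).

Lemma card_porbit_cyclic x : #|porbit pi x| = N.
Proof.
have -> : porbit pi x = [set: T] by apply/setP => y; rewrite inE pi_cyclic.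
exact: cardsT.
Qed.

Lemma mem_traject_cyclic s z : z \in traject pi s N.
Proof. by rewrite -(card_porbit_cyclic s) -porbit_traject. Qed.

Lemma uniq_traject_cyclic s : uniq (traject pi s N).
Proof. by rewrite -(card_porbit_cyclic s) uniq_traject_porbit. Qed.

Lemma pos_lt s z : pos s z < N.
Proof. by rewrite /pos -{2}(size_traject pi s N) index_mem mem_traject_cyclic. Qed.

Lemma iter_pos s z : iter (pos s z) pi s = z.
Proof.
by rewrite -(nth_traject _ (pos_lt s z)) nth_index ?mem_traject_cyclic.
Qed.

Lemma pos_iter s i : i < N -> pos s (iter i pi s) = i.
Proof.
move=> Hi; rewrite /pos -(nth_traject _ Hi) index_uniq ?size_traject //.
exact: uniq_traject_cyclic.
Qed.

Lemma iter_card_cyclic s : iter N pi s = s.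
Proof. by rewrite -{1}(card_porbit_cyclic s) iter_porbit. Qed.

Lemma pos_inj s : injective (pos s).
Proof. by move=> z z' H; rewrite -(iter_pos s z) H iter_pos. Qed.

Lemma pos_id s : pos s s = 0.
Proof.
have : 0 < N by apply/card_gt0P; exists s.
by rewrite /pos; case: #|T| => //= n _; rewrite eqxx.
Qed.

Lemma pos_iter_start s j z : j <= N ->
  pos (iter j pi s) z = if j <= pos s z then pos s z - j else pos s z + N - j.
Proof.
move=> HjN; have Hp := pos_lt s z; case: ifP => Hj.
  have Ez : z = iter (pos s z - j) pi (iter j pi s) by rewrite -iterD subnK // iter_pos.
  rewrite {1}Ez pos_iter //; lia.
have Ez : z = iter (pos s z + N - j) pi (iter j pi s).
  rewrite -iterD (_ : _ + j = pos s z + N); last by lia.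
  by rewrite iterD iter_card_cyclic iter_pos.
rewrite {1}Ez pos_iter //; lia.
Qed.

Lemma pos_succ s z : pos s z < N.-1 -> pos s (pi z) = (pos s z).+1.
Proof. by move=> H; rewrite -{1}(iter_pos s z) -iterS pos_iter //; lia. Qed.

(* Composing with the transposition of two points of the cycle cuts it into
   two cycles: the arc from [x] (excluded) to [y] (included), and the rest. *)
Section CutCycle.
Variables (x y : T).
Hypothesis xy : x != y.
Local Notation pi2 := (tperm x y * pi)%g.

Lemma cut_cycleE z : pi2 z = pi (tperm x y z).
Proof. by rewrite permM. Qed.

Lemma pos_cut_gt0 : 0 < pos x y.
Proof.
rewrite lt0n; apply/negP => /eqP H.
by move: xy; rewrite -(iter_pos x y) H eqxx.
Qed.

Lemma tperm_out z : z != x -> z != y -> tperm x y z = z.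
Proof. by move=> H1 H2; rewrite tpermD // eq_sym. Qed.

Lemma porbit_cut_cycle z : (z \in porbit pi2 y) = (0 < pos x z <= pos x y).
Proof.
have Hy := pos_cut_gt0; have Hly := pos_lt x y; have Hx0 := pos_id x.
apply/idP/idP.
  move/porbitP => [i ->]; rewrite permX.
  elim: i => [|i IH] /=; first by rewrite Hy leqnn.
  move: IH; set w := iter i pi2 y => /andP [H1 H2].
  rewrite cut_cycleE; case: (eqVneq w y) => [-> | Hwy].
    rewrite tpermR pos_succ ?Hx0 //; lia.
  have Hwx : w != x by apply/negP => /eqP Hw; move: H1; rewrite Hw Hx0.
  have Hne : pos x w != pos x y.
    by apply/negP => /eqP /pos_inj Hw; rewrite Hw eqxx in Hwy.
  rewrite tperm_out // pos_succ; lia.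
move=> /andP [H1 H2]; rewrite -(iter_pos x z).
move: H1 H2; elim: (pos x z) => [//|i IH] _ Hi.
case: i IH Hi => [|i] IH Hi.
  have -> : iter 1 pi x = pi2 y by rewrite cut_cycleE tpermR.
  by apply: porbit_step; apply: porbit_id.
have Hw := IH isT (ltnW Hi).
have Hwp : pos x (iter i.+1 pi x) = i.+1 by rewrite pos_iter //; lia.
have Hwx : iter i.+1 pi x != x by apply/negP => /eqP Hw'; move: Hwp; rewrite Hw' Hx0.
have Hwy : iter i.+1 pi x != y by apply/negP => /eqP Hw'; move: Hwp; rewrite Hw'; lia.
have -> : iter i.+2 pi x = pi2 (iter i.+1 pi x) by rewrite cut_cycleE tperm_out.
exact: porbit_step.
Qed.

Lemma porbit_cut_cycle_other z : z \notin porbit pi2 y -> z \in porbit pi2 x.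
Proof.
rewrite porbit_cut_cycle => Hz.
have Hy := pos_cut_gt0; have Hly := pos_lt x y; have Hx0 := pos_id x.
case: (eqVneq z x) => [-> | Hzx]; first exact: porbit_id.
have Hz' : pos x y < pos x z.
  suff : pos x z != 0 by lia.
  by apply/negP => /eqP H; move: Hzx; rewrite -(iter_pos x z) H eqxx.
rewrite -(iter_pos x z); have := pos_lt x z.
move: Hz'; elim: (pos x z) => [//|i IH] Hi HiN.
case: (ltngtP (pos x y) i) => Hc; last 1 first.
- have -> : iter i.+1 pi x = pi2 x by rewrite cut_cycleE tpermL -Hc iterS iter_pos.
  by apply: porbit_step; apply: porbit_id.
- have Hw := IH Hc (ltnW HiN).
  have Hwp : pos x (iter i pi x) = i by rewrite pos_iter //; lia.
  have Hwx : iter i pi x != x by apply/negP => /eqP Hw'; move: Hwp; rewrite Hw' Hx0; lia.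
  have Hwy : iter i pi x != y by apply/negP => /eqP Hw'; move: Hwp; rewrite Hw'; lia.
  have -> : iter i.+1 pi x = pi2 (iter i pi x) by rewrite cut_cycleE tperm_out.
  exact: porbit_step.
- lia.
Qed.
End CutCycle.
End CyclicPerm.

Lemma alphaK (E : finType) : involutive (@alpha E).
Proof. by case=> g b; rewrite /alpha /= negbK. Qed.

Lemma alpha_neq (E : finType) (z : dart E) : alpha z != z.
Proof. by case: z => g b; rewrite /alpha xpair_eqE eqxx /=; case: b. Qed.

Lemma dart_eq_or_alpha (E : finType) (d z : dart E) : d.1 = z.1 -> d = z \/ d = alpha z.
Proof.
by case: d z => [g b] [h c] /= ->; case: b; case: c; rewrite /alpha /=; [left|right|right|left].
Qed.

Lemma tperm_alpha (E : finType) (s : dart E) : tperm s (alpha s) = tperm (s.1, true) (s.1, false).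
Proof. by case: s => e [] //=; rewrite tpermC. Qed.

Section TourPerm.
Variables (V E : finType) (ends : E -> V * V) (sigma : {perm dart E}).
Local Notation D := (dart E).
Local Notation tl := (tail ends).

Definition flip_on (X : {set E}) (d : D) : D := if d.1 \in X then alpha d else d.

Lemma flip_onK (X : {set E}) : involutive (flip_on X).
Proof.
move=> [e b]; rewrite /flip_on /alpha /=.
by case: (boolP (e \in X)) => H /=; rewrite ?H /= ?negbK // (negbTE H).
Qed.

Definition tour_perm (X : {set E}) : {perm D} := (perm (can_inj (flip_onK X)) * sigma)%g.

Lemma tour_permE (X : {set E}) (d : D) : tour_perm X d = tour_step sigma X d.
Proof. by rewrite permM permE /flip_on /tour_step; case: ifP. Qed.

Lemma tour_perm_in (X : {set E}) (d : D) : d.1 \in X -> tour_perm X d = sigma (alpha d).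
Proof. by move=> Hd; rewrite tour_permE /tour_step Hd. Qed.

Lemma tour_perm_notin (X : {set E}) (d : D) : d.1 \notin X -> tour_perm X d = sigma d.
Proof. by move=> Hd; rewrite tour_permE /tour_step (negbTE Hd). Qed.

Lemma tour_perm_agree (X Y : {set E}) (d : D) :
  (d.1 \in X) = (d.1 \in Y) -> tour_perm X d = tour_perm Y d.
Proof. by move=> H; rewrite !tour_permE /tour_step H. Qed.

Lemma tour_perm_setU1 (X : {set E}) (f : E) : f \notin X ->
  tour_perm (f |: X) = (tperm (f, true) (f, false) * tour_perm X)%g.
Proof.
move=> fX; apply/permP => [[g b]]; rewrite !permM !permE /flip_on /alpha !inE /=.
case: (eqVneq g f) => [-> | gf] /=.
  by case: b; rewrite !xpair_eqE !eqxx /= ?(negbTE fX).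
by rewrite !xpair_eqE (negbTE gf).
Qed.

Lemma tour_perm_setD1 (X : {set E}) (f : E) : f \in X ->
  tour_perm (X :\ f) = (tperm (f, true) (f, false) * tour_perm X)%g.
Proof.
move=> fX; have fX' : f \notin X :\ f by rewrite !inE eqxx.
by rewrite -{2}(setD1K fX) tour_perm_setU1 // mulgA tperm2 mul1g.
Qed.

Lemma tour_perm_set0 : tour_perm set0 = sigma.
Proof. by apply/permP => d; rewrite tour_permE /tour_step in_set0. Qed.

Lemma traject_tour_step (X : {set E}) s n :
  traject (tour_step sigma X) s n = traject (tour_perm X) s n.
Proof. by elim: n s => [|n IH] s //=; rewrite IH tour_permE. Qed.

(* The number of boundary components of the ribbon subgraph with edge set [X]. *)
Definition nfaces_sub (X : {set E}) := #|porbits (tour_perm X)|.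

Lemma nfaces_sub_setU1 (X : {set E}) (f : E) : f \notin X ->
  nfaces_sub (f |: X) + ((f, true) \notin porbit (tour_perm X) (f, false)).*2
  = nfaces_sub X + 1.
Proof.
by move=> fX; rewrite /nfaces_sub tour_perm_setU1 // porbits_mul_tperm xpair_eqE eqxx.
Qed.

Lemma nfaces_sub_subset (Y Z : {set E}) : Y \subset Z ->
  nfaces_sub Z + #|Y| <= nfaces_sub Y + #|Z|.
Proof.
move: {2}#|Z :\: Y| (erefl #|Z :\: Y|) => n; elim: n Y => [|n IH] Y HYZ YZ.
  have : Z :\: Y == set0 by rewrite -cards_eq0 HYZ.
  rewrite setD_eq0 => ZY.
  by have -> : Y = Z by apply/eqP; rewrite eqEsubset YZ ZY.
have [f fZY] : exists f, f \in Z :\: Y by apply/card_gt0P; rewrite HYZ.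
move: (fZY); rewrite inE => /andP [fY fZ].
have H1 := nfaces_sub_setU1 fY.
have H2 : #|f |: Y| = #|Y| + 1 by rewrite cardsU1 fY addnC.
have H3 : #|Z :\: (f |: Y)| = n.
  have -> : Z :\: (f |: Y) = (Z :\: Y) :\ f.
    by apply/setP => h; rewrite !inE negb_or andbA.
  by move: HYZ; rewrite (cardsD1 f) fZY; lia.
have H4 : f |: Y \subset Z by rewrite subUset sub1set fZ YZ.
have := IH (f |: Y) H3 H4; lia.
Qed.

Lemma nfaces_sub_setT : nfaces_sub setT = nfaces sigma.
Proof.
rewrite /nfaces_sub card_porbits_fcard; apply: eq_fcard => d.
by rewrite tour_perm_in ?in_setT.
Qed.

Lemma adj_sym (X : {set E}) : symmetric (adj ends X).
Proof. by move=> a b; apply/existsP/existsP => [[e He] | [e He]]; exists e; rewrite orbC. Qed.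

Lemma connect_adj_sym (X : {set E}) : connect_sym (adj ends X).
Proof. exact: sym_connect_sym (adj_sym X). Qed.

Lemma connect_adj_subset (X Y : {set E}) a b : X \subset Y ->
  connect (adj ends X) a b -> connect (adj ends Y) a b.
Proof.
move=> XY; apply: connect_sub => {}a {}b /existsP [e /andP [eX H]].
by apply: connect1; apply/existsP; exists e; rewrite H andbT (subsetP XY).
Qed.

Lemma adj_dart (X : {set E}) (d : D) : d.1 \in X -> adj ends X (tl d) (tl (alpha d)).
Proof.
move=> H; apply/existsP; exists d.1; rewrite H /=.
by case: d H => [e [|]] _; rewrite /tail /alpha /= -surjective_pairing eqxx ?orbT.
Qed.

Hypothesis sigma_ribbon : ribbon ends sigma.

Lemma tail_sigma d : tl (sigma d) = tl d.
Proof. by case: sigma_ribbon => H _; apply: H. Qed.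

Lemma connect_tail_porbit (X : {set E}) (d z : D) :
  z \in porbit (tour_perm X) d -> connect (adj ends X) (tl d) (tl z).
Proof.
move/porbitP => [i ->]; rewrite permX; elim: i => [|i IH] /=; first exact: connect0.
apply: connect_trans IH _; set w := iter i _ d; rewrite tour_permE /tour_step.
case: ifP => H; rewrite tail_sigma; last exact: connect0.
by apply: connect1; apply: adj_dart.
Qed.

End TourPerm.

Section SpanningTrees.
Variables (V E : finType) (ends : E -> V * V) (sigma : {perm dart E}).
Local Notation D := (dart E).
Local Notation tl := (tail ends).
Local Notation nfaces_sub := (nfaces_sub sigma).
Local Notation tour_perm := (tour_perm sigma).
Hypothesis sigma_ribbon : ribbon ends sigma.

Definition touches (S : {set V}) (g : E) := ((ends g).1 \in S) || ((ends g).2 \in S).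
Definition inside (S : {set V}) (g : E) := ((ends g).1 \in S) && ((ends g).2 \in S).

Lemma touches_dart (S : {set V}) (z : D) :
  touches S z.1 = (tl z \in S) || (tl (alpha z) \in S).
Proof. by case: z => g [] //; rewrite /touches /tail /= orbC. Qed.

Lemma inside_dart (S : {set V}) (z : D) :
  inside S z.1 = (tl z \in S) && (tl (alpha z) \in S).
Proof. by case: z => g [] //; rewrite /inside /tail /= andbC. Qed.

Lemma connect_exit (X : {set E}) (S : {set V}) a r :
  connect (adj ends X) a r -> a \in S -> r \notin S ->
  exists x y, [/\ x \in S, y \notin S & adj ends X x y].
Proof.
move=> Har aS rS.
case: (boolP [exists x, [exists y, [&& x \in S, y \notin S & adj ends X x y]]]).
  by move=> /existsP [x /existsP [y /and3P [H1 H2 H3]]]; exists x, y.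
move=> Hno; have clS : closed (adj ends X) S.
  move=> x y hxy; apply/idP/idP => [xS | yS]; apply/negPn/negP => hn; move/negP: Hno; apply.
    by apply/existsP; exists x; apply/existsP; exists y; rewrite xS hn hxy.
  by apply/existsP; exists y; apply/existsP; exists x; rewrite yS hn adj_sym.
by have := closed_connect clS Har; rewrite aS (negbTE rS).
Qed.

(* In a connected spanning subgraph every proper vertex set [S] meets at least
   [#|S|] edges: removing one exit vertex at a time loses at least one edge. *)
Lemma card_touching_edges (X : {set E}) (S : {set V}) r :
  (forall u w, connect (adj ends X) u w) ->
  r \notin S -> #|S| <= #|[set g in X | touches S g]|.
Proof.
move=> Hc; move: {2}#|S| (erefl #|S|) => n; elim: n S => [|n IH] S HS rS.
  by rewrite HS.
have [a aS] : exists a, a \in S by apply/card_gt0P; rewrite HS.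
have [x [y [xS yS /existsP [g /andP [gX Hg]]]]] := connect_exit (Hc a r) aS rS.
have HS2 : #|S :\ x| = n by move: HS; rewrite (cardsD1 x) xS; lia.
have rS2 : r \notin S :\ x by rewrite !inE (negbTE rS) andbF.
have := IH (S :\ x) HS2 rS2.
have Hsub : [set g in X | touches (S :\ x) g] \proper [set g in X | touches S g].
  apply/properP; split.
    apply/subsetP => h; rewrite /touches !inE => /andP [hX Ht]; rewrite hX /=.
    by case/orP: Ht => /andP [_ H]; rewrite H ?orbT.
  exists g; rewrite !inE gX /touches /=.
    by case/orP: Hg => /eqP -> /=; rewrite ?xS ?orbT.
  by case/orP: Hg => /eqP -> /=; rewrite !inE eqxx /= (negbTE yS) ?andbF.
have := proper_card Hsub; lia.
Qed.

(* Adding a tree edge never joins two boundary components, since its two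
   darts lie in different components of the subforest without it. *)
Lemma nfaces_sub_forest (T : {set E}) : spanning_tree ends T ->
  forall X : {set E}, X \subset T -> nfaces_sub X + #|X| = nfaces_sub set0.
Proof.
move=> [_ HT] X; move: {2}#|X| (erefl #|X|) => n; elim: n X => [|n IH] X HX XT.
  by move/eqP: HX; rewrite cards_eq0 => /eqP ->; rewrite cards0 addn0.
have [f fX] : exists f, f \in X by apply/card_gt0P; rewrite HX.
have fX' : f \notin X :\ f by rewrite !inE eqxx.
have := nfaces_sub_setU1 sigma fX'; rewrite setD1K //.
have Hn : (f, true) \notin porbit (tour_perm (X :\ f)) (f, false).
  apply/negP => /(connect_tail_porbit sigma_ribbon) H.
  have := HT f (subsetP XT f fX); apply/negP/negPn.
  rewrite connect_adj_sym; apply: connect_adj_subset H; apply/subsetP => h; rewrite !inE.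
  by move=> /andP [-> hX]; rewrite (subsetP XT).
rewrite Hn => H.
have XT' : X :\ f \subset T by apply: subset_trans XT; apply: subD1set.
have := IH (X :\ f) _ XT'; move: HX; rewrite (cardsD1 f) fX; lia.
Qed.

Section SomeDart.
Variable d0 : D.

Lemma nfaces_sub0_le : nfaces_sub set0 <= #|V|.
Proof.
rewrite /nfaces_sub tour_perm_set0.
pose h (P : {set D}) := tl (odflt d0 [pick z in P]).
have Hh : {in porbits sigma &, injective h}.
  move=> P Q /imsetP [x _ ->] /imsetP [y _ ->]; rewrite /h.
  case: pickP => [a Ha|H]; last by have := H x; rewrite porbit_id.
  case: pickP => [b Hb|H]; last by have := H y; rewrite porbit_id.
  move=> /= Hab.
  have Hba : b \in porbit sigma a by rewrite porbit_fconnect; case: sigma_ribbon => _ ->.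
  by rewrite -(porbit_eq Ha) -(porbit_eq Hb) (porbit_eq Hba).
by rewrite -(card_in_imset Hh); apply: max_card.
Qed.

Lemma spanning_tree_card (T : {set E}) : spanning_tree ends T ->
  nfaces_sub T = 1 /\ #|T|.+1 = #|V|.
Proof.
move=> HT; have H1 := nfaces_sub_forest HT (subxx T).
have H2 := nfaces_sub0_le.
have H3 : 0 < nfaces_sub T.
  by apply/card_gt0P; exists (porbit (tour_perm T) d0); apply: imset_f.
have H4 : #|[set~ tl d0]| <= #|T|.
  apply: leq_trans (card_touching_edges (proj1 HT) (_ : tl d0 \notin [set~ tl d0])) _.
    by rewrite !inE eqxx.
  by apply: subset_leq_card; apply/subsetP => g; rewrite inE => /andP [].
rewrite cardsC1 in H4.
have H5 : 0 < #|V| by apply/card_gt0P; exists (tl d0).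
split; lia.
Qed.
Lemma card_inside_tree_edges (T : {set E}) (S : {set V}) x0 :
  spanning_tree ends T -> x0 \in S -> #|[set g in T | inside S g]| < #|S|.
Proof.
move=> HT xS; have [_ H1] := spanning_tree_card HT.
have H2 := card_touching_edges (proj1 HT) (_ : x0 \notin ~: S).
have H3 := cardsC S.
have H4 := cardsID [set g | inside S g] T.
have E1 : T :&: [set g | inside S g] = [set g in T | inside S g].
  by apply/setP => g; rewrite !inE.
have E2 : T :\: [set g | inside S g] = [set g in T | touches (~: S) g].
  by apply/setP => g; rewrite !inE /inside /touches !inE negb_and andbC.
rewrite E1 E2 in H4.
have := H2; rewrite inE xS => /(_ isT); lia.
Qed.
End SomeDart.

Lemma tour_perm_cyclic (T : {set E}) : spanning_tree ends T ->
  forall x y, y \in porbit (tour_perm T) x.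
Proof.
move=> HT x y; have [H1 _] := spanning_tree_card x HT.
have /cards1P [P HP] : #|porbits (tour_perm T)| == 1 by rewrite -/(nfaces_sub _) H1.
have Hx : porbit (tour_perm T) x \in porbits (tour_perm T) by apply: imset_f.
have Hy : porbit (tour_perm T) y \in porbits (tour_perm T) by apply: imset_f.
by rewrite HP !inE in Hx Hy; rewrite (eqP Hx) -(eqP Hy) porbit_id.
Qed.

Hypothesis sigma_planar : planar V sigma.

(* Euler's formula: adding a second non-tree edge [g] to [e |: T] cannot merge
   two boundary components, otherwise [nfaces_sub setT] would be too small. *)
Lemma planar_tour_split (T : {set E}) (e g : E) : spanning_tree ends T ->
  e \notin T -> g \notin e |: T -> (g, true) \in porbit (tour_perm (e |: T)) (g, false).
Proof.
move=> HT eT geT.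
have [H0 HcT] := spanning_tree_card (e, true) HT.
have H1 := nfaces_sub_setU1 sigma eT.
have H2 := nfaces_sub_setU1 sigma geT.
have H3 := nfaces_sub_subset sigma (subsetT (g |: (e |: T))).
rewrite nfaces_sub_setT cardsT in H3.
have H4 : #|g |: (e |: T)| = #|T| + 2 by rewrite !cardsU1 geT eT; lia.
have H1' : nfaces_sub (e |: T) <= 2 by move: H1; rewrite H0; case: (_ \notin _) => /=; lia.
move: sigma_planar; rewrite /planar => HP.
case: (boolP ((g, true) \in porbit (tour_perm (e |: T)) (g, false))) => // Hn.
rewrite Hn /= in H2; lia.
Qed.

End SpanningTrees.

Section FirstCut.
Variables (V E : finType) (ends : E -> V * V) (sigma : {perm dart E}).
Local Notation D := (dart E).
Local Notation tl := (tail ends).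
Local Notation tour_perm := (tour_perm sigma).
Local Notation N := #|{: dart E}|.
Hypothesis sigma_ribbon : ribbon ends sigma.

Definition eta_from (X : {set E}) (s : D) (g : E) : V :=
  tl (nth s (traject (tour_step sigma X) s N)
        (find (fun d : D => d.1 == g) (traject (tour_step sigma X) s N))).

Definition bernardi_from (X : {set E}) (s : D) : divisor V :=
  fun u => Posz #|[set g | (g \notin X) && (eta_from X s g == u)]|.

Lemma bernardi_start (X : {set E}) v e :
  bernardi ends sigma X v e = bernardi_from X (start_dart ends v e).
Proof. by []. Qed.

Variable X : {set E}.
Hypothesis X_tree : spanning_tree ends X.
Let X_cyclic := tour_perm_cyclic sigma_ribbon X_tree.
Local Notation pos := (pos (tour_perm X)).

Lemma pos_tree_lt s z : pos s z < N.
Proof. exact: pos_lt X_cyclic s z. Qed.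

Lemma pos_tree_iter_start s j z : j <= N ->
  pos (iter j (tour_perm X) s) z =
  if j <= pos s z then pos s z - j else pos s z + N - j.
Proof. exact: pos_iter_start X_cyclic s j z. Qed.

Lemma pos_tree_iter s i : i < N -> pos s (iter i (tour_perm X) s) = i.
Proof. exact: pos_iter X_cyclic s i. Qed.

Lemma pos_alpha_neq s z : pos s z != pos s (alpha z).
Proof.
by apply/negP => /eqP /(pos_inj X_cyclic) H; move: (alpha_neq z); rewrite -H eqxx.
Qed.

Lemma eta_first s z : pos s z < pos s (alpha z) -> eta_from X s z.1 = tl z.
Proof.
move=> Hlt; rewrite /eta_from traject_tour_step.
set t := traject _ s N; set p := (fun d : D => d.1 == z.1).
have Hu : uniq t by apply: uniq_traject_cyclic X_cyclic s.
have Hz : z \in t by apply: mem_traject_cyclic X_cyclic s z.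
have Hhas : has p t by apply/hasP; exists z => //; rewrite /p eqxx.
case: (dart_eq_or_alpha (eqP (nth_find s Hhas))) => [-> // | Hc].
have Hpk : find p t = pos s (alpha z) by rewrite /pos -/t -Hc index_uniq // -has_find.
have := @before_find _ s p t (pos s z); rewrite Hpk => /(_ Hlt).
by rewrite /p /pos -/t nth_index // eqxx.
Qed.

Lemma eta_endpoint s g : eta_from X s g = tl (g, true) \/ eta_from X s g = tl (g, false).
Proof.
have := pos_alpha_neq s (g, true).
case: (ltngtP (pos s (g, true)) (pos s (alpha (g, true)))) => // H _.
  by left; apply: eta_first H.
by right; apply: (@eta_first s (g, false)).
Qed.

Lemma eta_iter_start s j z : j <= N ->
  (pos s z < j) = (pos s (alpha z) < j) ->
  eta_from X (iter j (tour_perm X) s) z.1 = eta_from X s z.1.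
Proof.
move=> Hj Heq.
have Hs := pos_tree_iter_start s z Hj.
have Hs' := pos_tree_iter_start s (alpha z) Hj.
have L1 := pos_tree_lt s z; have L2 := pos_tree_lt s (alpha z).
move: (pos_alpha_neq s z) Heq; case: (ltngtP (pos s z) (pos s (alpha z))) => // Hc _ Heq.
- rewrite (eta_first Hc) eta_first // Hs Hs'; move: Heq.
  by case: (leqP j (pos s z)) => h1; case: (leqP j (pos s (alpha z))) => h2; lia.
- have Hc' : pos s (alpha z) < pos s (alpha (alpha z)) by rewrite alphaK.
  rewrite (_ : z.1 = (alpha z).1) // (eta_first Hc') eta_first // alphaK Hs Hs'; move: Heq.
  by case: (leqP j (pos s z)) => h1; case: (leqP j (pos s (alpha z))) => h2; lia.
Qed.

Lemma eta_iter_start_swap s j z : j <= N -> pos s z < j <= pos s (alpha z) ->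
  eta_from X s z.1 = tl z /\ eta_from X (iter j (tour_perm X) s) z.1 = tl (alpha z).
Proof.
move=> Hj /andP [H1 H2].
have Hs := pos_tree_iter_start s z Hj.
have Hs' := pos_tree_iter_start s (alpha z) Hj.
have L1 := pos_tree_lt s z; have L2 := pos_tree_lt s (alpha z).
split; first by apply: eta_first; lia.
rewrite (_ : z.1 = (alpha z).1) //; apply: eta_first; rewrite alphaK Hs Hs'.
by case: (leqP j (pos s z)) => h1; case: (leqP j (pos s (alpha z))) => h2; lia.
Qed.

End FirstCut.

Lemma card_set_sum (E : finType) (P : pred E) : #|[set g | P g]| = \sum_g P g.
Proof. by rewrite -sum1_card big_mkcond /=; apply: eq_bigr => g _; rewrite inE; case: (P g). Qed.

Section Laplacian.
Variables (V E : finType) (ends : E -> V * V).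
Local Notation D := (dart E).
Local Notation tl := (tail ends).
Local Open Scope ring_scope.

Definition lap_edge (f : V -> int) (g : E) (u : V) : int :=
  if (ends g).1 == u then f u - f (ends g).2
  else if (ends g).2 == u then f u - f (ends g).1 else 0.

Lemma laplacianE f u : laplacian ends f u = \sum_(g : E) lap_edge f g u.
Proof. by []. Qed.

Lemma laplacianB f h u :
  laplacian ends (fun x => f x - h x) u = laplacian ends f u - laplacian ends h u.
Proof.
rewrite !laplacianE -sumrB; apply: eq_bigr => g _; rewrite /lap_edge.
by case: ((ends g).1 == u); case: ((ends g).2 == u); ring.
Qed.

Lemma laplacianD f h u :
  laplacian ends (fun x => f x + h x) u = laplacian ends f u + laplacian ends h u.
Proof.
rewrite !laplacianE -big_split; apply: eq_bigr => g _; rewrite /lap_edge /=.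
by case: ((ends g).1 == u); case: ((ends g).2 == u); ring.
Qed.

Lemma lap_edge_cst c g u : lap_edge (fun _ => c) g u = 0.
Proof. by rewrite /lap_edge; case: ((ends g).1 == u); case: ((ends g).2 == u); rewrite ?subrr. Qed.

Lemma laplacian_cst c u : laplacian ends (fun _ => c) u = 0.
Proof. by rewrite laplacianE big1 // => g _; apply: lap_edge_cst. Qed.

Definition indic (W : {set V}) (x : V) : int := (x \in W)%:Z.
Definition dirac (a u : V) : int := (a == u)%:Z.

Lemma lap_edge_indic_same (W : {set V}) (g : E) (u : V) :
  ((ends g).1 \in W) = ((ends g).2 \in W) -> lap_edge (indic W) g u = 0.
Proof.
rewrite /lap_edge /indic => H; case: (eqVneq (ends g).1 u) => [<-|_]; first by rewrite H subrr.
by case: (eqVneq (ends g).2 u) => [<-|_] //; rewrite H subrr.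
Qed.

Hypothesis ends_loopless : loopless ends.

Lemma lap_edge_indic_cross (W : {set V}) (z : D) (u : V) :
  tl z \in W -> tl (alpha z) \notin W ->
  lap_edge (indic W) z.1 u = dirac (tl z) u - dirac (tl (alpha z)) u.
Proof.
have Hl := ends_loopless z.1.
case: z Hl => g [] /= Hl; rewrite /tail /alpha /= => H1 H2; rewrite /lap_edge /indic /dirac.
all: case: (eqVneq (ends g).1 u) => [E1|E1];
  first by subst u; rewrite eq_sym (negbTE Hl) H1 (negbTE H2) /=; lia.
all: by case: (eqVneq (ends g).2 u) => [E2|E2] //; subst u; rewrite H1 (negbTE H2) /=; lia.
Qed.

Lemma card_set_sumz (P : pred E) : Posz #|[set g | P g]| = \sum_g (P g)%:Z.
Proof.
rewrite -(big_morph Posz PoszD (erefl (Posz 0))) -sum1_card big_mkcond /=.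
by congr Posz; apply: eq_bigr => g _; rewrite inE; case: (P g).
Qed.

Lemma sum_lap_edge (phi : V -> int) (S : {set V}) (g : E) :
  \sum_(x in S) lap_edge phi g x =
  (if (ends g).1 \in S then phi (ends g).1 - phi (ends g).2 else 0)
  + (if (ends g).2 \in S then phi (ends g).2 - phi (ends g).1 else 0).
Proof.
have sum_pick a (c : int) : \sum_(x in S) (if a == x then c else 0) = if a \in S then c else 0.
  rewrite big_mkcond /= (bigD1 a) //= eqxx big1 ?addr0 // => x /negbTE Hx.
  by rewrite eq_sym Hx; case: (_ \in _).
have Hsplit x : lap_edge phi g x =
  (if (ends g).1 == x then phi (ends g).1 - phi (ends g).2 else 0)
  + (if (ends g).2 == x then phi (ends g).2 - phi (ends g).1 else 0).
  rewrite /lap_edge; have Hl := ends_loopless g.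
  case: (eqVneq (ends g).1 x) => [<-|H1]; first by rewrite eq_sym (negbTE Hl) addr0.
  by case: (eqVneq (ends g).2 x) => [<-|H2]; rewrite ?add0r.
by rewrite (eq_bigr _ (fun x _ => Hsplit x)) big_split /= !sum_pick.
Qed.

End Laplacian.

Section BernardiSums.
Variables (V E : finType) (ends : E -> V * V) (sigma : {perm dart E}).
Local Notation D := (dart E).
Local Notation eta_from := (eta_from ends sigma).
Local Notation bernardi_from := (bernardi_from ends sigma).
Local Open Scope ring_scope.

Lemma bernardi_from_diff (X : {set E}) (s s' : D) (phi : V -> int) (e : E) (c : V -> int) :
  (forall g u, g != e ->
     ((g \notin X) && (eta_from X s g == u))%:Z
     - ((g \notin X) && (eta_from X s' g == u))%:Z = lap_edge ends phi g u) ->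
  (forall u, ((e \notin X) && (eta_from X s e == u))%:Z
     - ((e \notin X) && (eta_from X s' e == u))%:Z - c u = lap_edge ends phi e u) ->
  forall u, bernardi_from X s u - bernardi_from X s' u - c u = laplacian ends phi u.
Proof.
move=> Hg He u; rewrite /bernardi_from !card_set_sumz laplacianE.
rewrite (bigD1 e) //= [X in _ - X - _](bigD1 e) //= [in RHS](bigD1 e) //= -(He u).
rewrite [in RHS](eq_bigr _ (fun g Hge => esym (Hg g u Hge))) sumrB; ring.
Qed.

Lemma sum_bernardi_from (X : {set E}) (s : D) (S : {set V}) :
  \sum_(x in S) bernardi_from X s x = \sum_g ((g \notin X) && (eta_from X s g \in S))%:Z.
Proof.
rewrite /bernardi_from; under eq_bigr => x _ do rewrite card_set_sumz.
rewrite exchange_big /=; apply: eq_bigr => g _.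
rewrite big_mkcond /= (bigD1 (eta_from X s g)) //= eqxx big1 ?addr0.
  by case: (_ \in S); case: (g \notin X).
by move=> x /negbTE Hx; rewrite eq_sym Hx andbF; case: (_ \in _).
Qed.

End BernardiSums.

Section StartShift.
Variables (V E : finType) (ends : E -> V * V) (sigma : {perm dart E}).
Local Notation D := (dart E).
Local Notation tl := (tail ends).
Local Notation tour_perm := (tour_perm sigma).
Local Notation N := #|{: dart E}|.
Hypothesis sigma_ribbon : ribbon ends sigma.
Hypothesis ends_loopless : loopless ends.
Hypothesis sigma_planar : planar V sigma.

Variable X : {set E}.
Hypothesis X_tree : spanning_tree ends X.
Let X_cyclic := tour_perm_cyclic sigma_ribbon X_tree.
Local Notation pos := (pos (tour_perm X)).
Local Notation eta_from := (eta_from ends sigma X).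
Local Notation bernardi_from := (bernardi_from ends sigma X).

Definition dipole (s : D) (u : V) : int := (dirac (tl s) u - dirac (tl (alpha s)) u)%R.

Definition shift_equiv (s s' : D) := exists phi : V -> int, forall u,
  (bernardi_from s u - bernardi_from s' u - dipole s u = laplacian ends phi u)%R.

Lemma pos_alpha_gt0 s : 0 < pos s (alpha s).
Proof. by have := pos_alpha_neq sigma_ribbon X_tree s s; rewrite pos_id lt0n eq_sym. Qed.

Lemma pos_other_edge s z : z.1 != s.1 -> 0 < pos s z /\ pos s z != pos s (alpha s).
Proof.
move=> Hz; split.
  rewrite lt0n; apply/negP => /eqP H.
  have /(pos_inj X_cyclic) Hzs : pos s z = pos s s by rewrite H pos_id.
  by rewrite Hzs eqxx in Hz.
by apply/negP => /eqP /(pos_inj X_cyclic) Hzs; rewrite Hzs eqxx in Hz.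
Qed.

Lemma shift_equiv_nontree s j : s.1 \notin X -> 0 < j <= pos s (alpha s) ->
  (forall g, g != s.1 -> g \notin X ->
     eta_from (iter j (tour_perm X) s) g = eta_from s g) ->
  shift_equiv s (iter j (tour_perm X) s).
Proof.
move=> Hs Hj Hg; exists (fun _ => 0%R); apply: (bernardi_from_diff (e := s.1)).
  move=> g u Hgs; rewrite lap_edge_cst.
  by case: (boolP (g \in X)) => gX /=; rewrite ?Hg // subrr.
move=> u; rewrite lap_edge_cst Hs /=.
have Hjn : j <= N by have := pos_tree_lt sigma_ribbon X_tree s (alpha s); lia.
have Hsw : pos s s < j <= pos s (alpha s) by rewrite pos_id.
have [-> ->] := eta_iter_start_swap sigma_ribbon X_tree Hjn Hsw.
by rewrite /dipole; ring.
Qed.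

Lemma shift_equiv_sigma_nontree s : s.1 \notin X -> shift_equiv s (sigma s).
Proof.
move=> Hs; rewrite -(tour_perm_notin _ Hs) -[tour_perm X s]/(iter 1 (tour_perm X) s).
apply: shift_equiv_nontree => //; first by rewrite pos_alpha_gt0.
move=> g Hgs gX.
have Hj1 : 1 <= N by have := pos_tree_lt sigma_ribbon X_tree s (alpha s); lia.
have [H1 _] := pos_other_edge (z := (g, true)) Hgs.
have [H2 _] := pos_other_edge (z := alpha (g, true)) Hgs.
apply: (eta_iter_start sigma_ribbon X_tree (z := (g, true)) Hj1); lia.
Qed.

(* By planarity [s.1 |: X] splits the tour into the arc strictly after [s] up
   to [alpha s] and the rest; both darts of any other edge lie on one side. *)
Lemma shift_equiv_alpha_nontree s : s.1 \notin X -> shift_equiv s (alpha s).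
Proof.
move=> Hs; rewrite -(iter_pos X_cyclic s (alpha s)).
apply: shift_equiv_nontree => //; first by rewrite pos_alpha_gt0 leqnn.
move=> g Hgs gX.
have Hj1 : pos s (alpha s) <= N by have := pos_tree_lt sigma_ribbon X_tree s (alpha s); lia.
have [H1 H1'] := pos_other_edge (z := (g, true)) Hgs.
have [H2 H2'] := pos_other_edge (z := alpha (g, true)) Hgs.
have gX' : g \notin s.1 |: X by rewrite !inE negb_or Hgs.
have Hsp := planar_tour_split sigma_ribbon sigma_planar X_tree Hs gX'.
rewrite tour_perm_setU1 // -tperm_alpha in Hsp.
have Hxy : s != alpha s by rewrite eq_sym alpha_neq.
have Heq : ((g, true) \in porbit (tperm s (alpha s) * tour_perm X)%g (alpha s)) =
           ((g, false) \in porbit (tperm s (alpha s) * tour_perm X)%g (alpha s)).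
  by rewrite -!eq_porbit_mem (porbit_eq Hsp).
rewrite !(porbit_cut_cycle X_cyclic Hxy) in Heq.
apply: (eta_iter_start sigma_ribbon X_tree (z := (g, true)) Hj1).
move: Heq H1 H1' H2 H2'; rewrite /alpha /=.
by case: (ltngtP (pos s (g, true)) (pos s (alpha s)));
  case: (ltngtP (pos s (g, false)) (pos s (alpha s))) => ? ? /=; lia.
Qed.

Definition cut_side (s : D) : {set V} :=
  [set x | connect (adj ends (X :\ s.1)) (tl (alpha s)) x].

Lemma tree_edge_cut s : s.1 \in X ->
  ~~ connect (adj ends (X :\ s.1)) (tl s) (tl (alpha s)).
Proof.
case: X_tree => _ HT Hs; have := HT _ Hs.
by case: s Hs => e [] /= _; rewrite /tail /alpha /= // connect_adj_sym.
Qed.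

(* Removing [s.1] from the tour cuts it exactly at [s] and [alpha s]. *)
Lemma mem_cut_side s z : s.1 \in X ->
  (tl z \in cut_side s) = (0 < pos s z <= pos s (alpha s)).
Proof.
move=> Hs; have Hxy : s != alpha s by rewrite eq_sym alpha_neq.
have Hdel : tour_perm (X :\ s.1) = (tperm s (alpha s) * tour_perm X)%g.
  by rewrite tperm_alpha tour_perm_setD1.
rewrite -(porbit_cut_cycle X_cyclic Hxy) -Hdel inE.
apply/idP/idP => [Hc | Ho]; last exact: (connect_tail_porbit sigma_ribbon Ho).
apply/negPn/negP; rewrite Hdel => /(porbit_cut_cycle_other X_cyclic Hxy).
rewrite -Hdel => /(connect_tail_porbit sigma_ribbon) H2.
have := tree_edge_cut Hs; apply/negP/negPn.
by apply: connect_trans H2 _; rewrite connect_adj_sym.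
Qed.

Lemma cut_side_tree_edge s g : s.1 \in X -> g \in X -> g != s.1 ->
  ((ends g).1 \in cut_side s) = ((ends g).2 \in cut_side s).
Proof.
move=> Hs gX Hgs.
have A : adj ends (X :\ s.1) (ends g).1 (ends g).2.
  by apply: (@adj_dart _ _ ends (X :\ s.1) (g, true)); rewrite !inE Hgs gX.
rewrite !inE; apply/idP/idP => H; apply: connect_trans H (connect1 _) => //.
by rewrite adj_sym.
Qed.

Lemma shift_equiv_tree s j : s.1 \in X ->
  (j = pos s (alpha s) \/ j = (pos s (alpha s)).+1) -> shift_equiv s (iter j (tour_perm X) s).
Proof.
move=> Hs Hj; set W := cut_side s.
have HjN : j <= N by have := pos_tree_lt sigma_ribbon X_tree s (alpha s); case: Hj => ->; lia.
have before_cut z : z.1 != s.1 -> (pos s z < j) = (tl z \in W).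
  move=> Hz; rewrite mem_cut_side //; have [H1 H2] := pos_other_edge Hz.
  have := pos_alpha_gt0 s.
  by case: Hj => -> _; (apply/idP/andP; [move=> ?; split; lia | case; lia]).
exists (indic W); apply: (bernardi_from_diff (e := s.1)); last first.
  move=> u; rewrite Hs /=.
  have H1 : tl (alpha s) \in W by rewrite inE connect0.
  have H2 : tl (alpha (alpha s)) \notin W.
    by rewrite alphaK inE connect_adj_sym; apply: tree_edge_cut.
  rewrite [s.1]/((alpha s).1) (lap_edge_indic_cross ends_loopless u H1 H2) alphaK /dipole.
  by ring.
move=> g u Hgs; case: (boolP (g \in X)) => gX /=.
  by rewrite subrr lap_edge_indic_same // cut_side_tree_edge.
have crossing z : z.1 = g -> tl z \in W -> tl (alpha z) \notin W ->
    ((eta_from s g == u)%:Z - (eta_from (iter j (tour_perm X) s) g == u)%:Z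
    = lap_edge ends (indic W) g u)%R.
  move=> Hzg Hz Haz; have Hz1 : z.1 != s.1 by rewrite Hzg.
  have Hsw : pos s z < j <= pos s (alpha z).
    by rewrite before_cut // Hz leqNgt before_cut // (negbTE Haz).
  rewrite -Hzg; have [-> ->] := eta_iter_start_swap sigma_ribbon X_tree HjN Hsw.
  by rewrite (lap_edge_indic_cross ends_loopless u Hz Haz).
case: (eqVneq ((ends g).1 \in W) ((ends g).2 \in W)) => Hside.
  have Hsh : (pos s (g, true) < j) = (pos s (g, false) < j).
    by rewrite (before_cut (g, true)) // (before_cut (g, false)).
  by rewrite (eta_iter_start sigma_ribbon X_tree HjN Hsh) subrr lap_edge_indic_same.
move: Hside; case: (boolP ((ends g).1 \in W)) => Ht; case: (boolP ((ends g).2 \in W)) => Hf //= _.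
- exact: (crossing (g, true)).
- exact: (crossing (g, false)).
Qed.

Lemma shift_equiv_sigma s : shift_equiv s (sigma s).
Proof.
case: (boolP (s.1 \in X)) => Hs; last exact: shift_equiv_sigma_nontree.
have -> : sigma s = iter (pos s (alpha s)).+1 (tour_perm X) s.
  by rewrite iterS (iter_pos X_cyclic) tour_perm_in ?alphaK.
by apply: shift_equiv_tree => //; right.
Qed.

Lemma shift_equiv_alpha s : shift_equiv s (alpha s).
Proof.
case: (boolP (s.1 \in X)) => Hs; last exact: shift_equiv_alpha_nontree.
rewrite -(iter_pos X_cyclic s (alpha s)).
by apply: shift_equiv_tree => //; left.
Qed.

End StartShift.

Section StartEquiv.
Variables (V E : finType) (ends : E -> V * V) (sigma : {perm dart E}).
Local Notation D := (dart E).
Local Notation tl := (tail ends).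
Local Notation bernardi_from := (bernardi_from ends sigma).
Hypothesis sigma_ribbon : ribbon ends sigma.
Hypothesis ends_loopless : loopless ends.
Hypothesis sigma_planar : planar V sigma.
Local Open Scope ring_scope.

Definition start_equiv (s s' : D) := forall X Y, spanning_tree ends X -> spanning_tree ends Y ->
  lin_equiv ends (fun u => bernardi_from X s u - bernardi_from Y s u)
                 (fun u => bernardi_from X s' u - bernardi_from Y s' u).

(* The dipole of [s] does not depend on the tree, so it cancels. *)
Lemma start_equiv_shift s s' :
  (forall X, spanning_tree ends X -> shift_equiv ends sigma X s s') -> start_equiv s s'.
Proof.
move=> H X Y HX HY; have [f Hf] := H X HX; have [h Hh] := H Y HY.
by exists (fun x => f x - h x) => u; rewrite laplacianB -Hf -Hh; ring.
Qed.

Lemma start_equiv_refl s : start_equiv s s.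
Proof. by move=> X Y _ _; exists (fun _ => 0) => u; rewrite laplacian_cst subrr. Qed.

Lemma start_equiv_trans s1 s2 s3 : start_equiv s1 s2 -> start_equiv s2 s3 -> start_equiv s1 s3.
Proof.
move=> H1 H2 X Y HX HY; have [f Hf] := H1 X Y HX HY; have [h Hh] := H2 X Y HX HY.
by exists (fun x => f x + h x) => u; rewrite laplacianD -Hf -Hh; ring.
Qed.

Lemma start_equiv_sigma s : start_equiv s (sigma s).
Proof. by apply: start_equiv_shift => X HX; apply: shift_equiv_sigma. Qed.

Lemma start_equiv_alpha s : start_equiv s (alpha s).
Proof. by apply: start_equiv_shift => X HX; apply: shift_equiv_alpha. Qed.

Lemma start_equiv_tail z z' : tl z = tl z' -> start_equiv z z'.
Proof.
case: sigma_ribbon => _ H /H Hc.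
rewrite -(iter_findex Hc); elim: (findex _ z z') => [|i IH] /=; first exact: start_equiv_refl.
exact: start_equiv_trans IH (start_equiv_sigma _).
Qed.

Hypothesis ends_connected : connected_graph ends.

Lemma start_equiv_all s s' : start_equiv s s'.
Proof.
suff K b : connect (adj ends setT) (tl s) b -> forall z, tl z = b -> start_equiv s z.
  by apply: (K (tl s')) => //; apply: ends_connected.
move=> /connectP [p Hp ->] {b}.
elim/last_ind: p Hp => [|p c IH] /=; first by move=> _ z Hz; apply: start_equiv_tail.
rewrite rcons_path last_rcons => /andP [/IH IHp /existsP [g /andP [_ Hg]]] z Hz.
have [d [Hd Had]] : exists d, tl d = last (tl s) p /\ tl (alpha d) = c.
  by case/orP: Hg => /eqP Hg; [exists (g, true) | exists (g, false)]; rewrite /tail /= Hg.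
apply: start_equiv_trans (IHp _ Hd) _; apply: start_equiv_trans (start_equiv_alpha _) _.
by apply: start_equiv_tail; rewrite Had.
Qed.

End StartEquiv.

Section BreakUniqueness.
Variables (V E : finType) (ends : E -> V * V) (sigma : {perm dart E}).
Local Notation D := (dart E).
Local Notation bernardi_from := (bernardi_from ends sigma).
Local Notation eta_from := (eta_from ends sigma).
Local Notation touches := (touches ends).
Local Notation inside := (inside ends).
Hypothesis sigma_ribbon : ribbon ends sigma.
Hypothesis ends_loopless : loopless ends.
Import Order.TTheory.
Local Open Scope ring_scope.

Lemma eta_touches (X : {set E}) s g (S : {set V}) : spanning_tree ends X ->
  eta_from X s g \in S -> touches S g.
Proof.
move=> HX; have [He|He] := eta_endpoint sigma_ribbon HX s g;
  by rewrite He /tail /= /touches => ->; rewrite ?orbT.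
Qed.

Lemma inside_eta (X : {set E}) s g (S : {set V}) : spanning_tree ends X ->
  inside S g -> eta_from X s g \in S.
Proof.
by move=> HX; have [He|He] := eta_endpoint sigma_ribbon HX s g; rewrite He /tail /= /inside;
  case/andP.
Qed.

(* The break-divisor inequalities for [S] a proper, resp. nonempty, vertex set. *)
Lemma sum_bernardi_from_le (X : {set E}) s (S : {set V}) r :
  spanning_tree ends X -> r \notin S ->
  \sum_(x in S) bernardi_from X s x <= #|[set g | touches S g]|%:Z - #|S|%:Z.
Proof.
move=> HX rS; rewrite sum_bernardi_from card_set_sumz.
have Hcut := card_touching_edges (proj1 HX) rS.
apply: le_trans (_ : _ <= \sum_g ((touches S g)%:Z - ((g \in X) && touches S g)%:Z)) _.
  apply: ler_sum => g _; case: (boolP (g \in X)) => gX /=; first by rewrite subrr.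
  by case: (boolP (eta_from X s g \in S)) => H /=; rewrite ?(eta_touches HX H) //; case: touches.
rewrite sumrB lerD2l lerN2 -card_set_sumz lez_nat.
by apply: leq_trans Hcut _; apply: subset_leq_card; apply/subsetP => g; rewrite !inE.
Qed.

Lemma sum_bernardi_from_gt (X : {set E}) s (S : {set V}) x0 :
  spanning_tree ends X -> x0 \in S ->
  #|[set g | inside S g]|%:Z - #|S|%:Z < \sum_(x in S) bernardi_from X s x.
Proof.
move=> HX xS; rewrite sum_bernardi_from card_set_sumz.
have Hin := card_inside_tree_edges sigma_ribbon s HX xS.
apply: lt_le_trans (_ : _ < \sum_g ((inside S g)%:Z - ((g \in X) && inside S g)%:Z)) _.
  rewrite sumrB ltrD2l ltrN2 -card_set_sumz ltz_nat.
  by apply: leq_ltn_trans Hin; apply: subset_leq_card; apply/subsetP => g; rewrite !inE.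
apply: ler_sum => g _; case: (boolP (g \in X)) => gX /=; first by rewrite subrr.
case: (boolP (inside S g)) => H /=; last by rewrite subrr; case: (_ \in _).
by rewrite (inside_eta _ HX H).
Qed.

(* On the top level set of [phi] every edge leaving it contributes at least 1. *)
Lemma sum_laplacian_top (phi : V -> int) (xm : V) (S : {set V}) :
  (forall x, phi x <= phi xm) -> S = [set x | phi x == phi xm] ->
  #|[set g | touches S g]|%:Z - #|[set g | inside S g]|%:Z <= \sum_(x in S) laplacian ends phi x.
Proof.
move=> Hm ->; rewrite !card_set_sumz -sumrB.
under [in X in _ <= X]eq_bigr do rewrite laplacianE.
rewrite exchange_big /=; apply: ler_sum => g _.
rewrite sum_lap_edge // /touches /inside !inE.
have := Hm (ends g).1; have := Hm (ends g).2.
by case: (eqVneq (phi (ends g).1) (phi xm)) => E1;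
  case: (eqVneq (phi (ends g).2) (phi xm)) => E2 /=; lia.
Qed.

Lemma bernardi_from_lin_equiv (X1 X2 : {set E}) (s : D) :
  spanning_tree ends X1 -> spanning_tree ends X2 ->
  lin_equiv ends (bernardi_from X1 s) (bernardi_from X2 s) ->
  forall u, bernardi_from X1 s u = bernardi_from X2 s u.
Proof.
move=> H1 H2 [phi Hphi].
pose xm := [arg max_(x > tail ends s) phi x]%O.
have Hm x : phi x <= phi xm by rewrite /xm; case: arg_maxP => // y _; apply.
case: (boolP [forall x, phi x == phi xm]) => [/forallP Hall | /forallPn [r Hr]].
  move=> u; apply/eqP; rewrite -subr_eq0 Hphi laplacianE big1 // => g _.
  by rewrite /lap_edge !(eqP (Hall _)) subrr; case: ifP => //; case: ifP.
exfalso; set S := [set x | phi x == phi xm].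
have rS : r \notin S by rewrite inE.
have xS : xm \in S by rewrite inE.
have Hsum : \sum_(x in S) bernardi_from X1 s x - \sum_(x in S) bernardi_from X2 s x =
            \sum_(x in S) laplacian ends phi x by rewrite -sumrB; apply: eq_bigr => x _.
have := sum_bernardi_from_le s H1 rS; have := sum_bernardi_from_gt s H2 xS.
have := sum_laplacian_top Hm (erefl S); lia.
Qed.

End BreakUniqueness.

Lemma iter_tour_prefix (E : finType) (sigma : {perm dart E}) (Ta Tb : {set E}) s k :
  (forall i, i < k -> ((iter i (tour_perm sigma Ta) s).1 \in Ta) =
                      ((iter i (tour_perm sigma Ta) s).1 \in Tb)) ->
  forall i, i <= k -> iter i (tour_perm sigma Tb) s = iter i (tour_perm sigma Ta) s.
Proof.
move=> Hpre; elim=> [//|i IH] Hi; rewrite !iterS IH; last by lia.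
by apply: tour_perm_agree; rewrite Hpre.
Qed.

(* Injectivity of [bernardi_from _ s]: if the tours of [Ta] and [Tb] from [s]
   agree up to step [k] and first differ at [d], a tree edge of [Ta] only,
   then counting non-tree edges with first-cut endpoint in the far side [W] of
   [d] gives different totals for [Ta] and [Tb]. *)
Section FirstDivergence.
Variables (V E : finType) (ends : E -> V * V) (sigma : {perm dart E}).
Local Notation D := (dart E).
Local Notation tl := (tail ends).
Local Notation N := #|{: dart E}|.
Local Notation tour_perm := (tour_perm sigma).
Local Notation bernardi_from := (bernardi_from ends sigma).
Local Notation eta_from := (eta_from ends sigma).
Local Notation touches := (touches ends).
Local Notation inside := (inside ends).
Hypothesis sigma_ribbon : ribbon ends sigma.

Variables (Ta Tb : {set E}) (s : D) (k : nat).
Hypothesis Ta_tree : spanning_tree ends Ta.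
Hypothesis Tb_tree : spanning_tree ends Tb.
Hypothesis k_lt : k < N.
Hypothesis prefix_agree : forall i, i < k ->
  ((iter i (tour_perm Ta) s).1 \in Ta) = ((iter i (tour_perm Ta) s).1 \in Tb).
Let d := iter k (tour_perm Ta) s.
Hypothesis d_Ta : d.1 \in Ta.
Hypothesis d_Tb : d.1 \notin Tb.
Hypothesis bernardi_eq : forall u, bernardi_from Ta s u = bernardi_from Tb s u.

Local Notation pa := (pos (tour_perm Ta) s).
Local Notation pb := (pos (tour_perm Tb) s).
Let Ta_cyclic := tour_perm_cyclic sigma_ribbon Ta_tree.
Let Tb_cyclic := tour_perm_cyclic sigma_ribbon Tb_tree.

Lemma mem_prefix z : pa z < k -> (z.1 \in Ta) = (z.1 \in Tb).
Proof. by move=> H; rewrite -(iter_pos Ta_cyclic s z); apply: prefix_agree. Qed.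

Lemma pos_prefix z : pa z <= k -> pb z = pa z.
Proof.
move=> H; rewrite -{1}(iter_pos Ta_cyclic s z) -(iter_tour_prefix prefix_agree) //.
by rewrite (pos_tree_iter sigma_ribbon Tb_tree) // (pos_tree_lt sigma_ribbon Ta_tree).
Qed.

Lemma pos_after_prefix z : k < pa z -> k < pb z.
Proof.
move=> H; rewrite ltnNge; apply/negP => H'.
have := iter_tour_prefix prefix_agree H'; rewrite (iter_pos Tb_cyclic s z) => Hz.
have : pa z = pb z.
  by rewrite {1}Hz (pos_tree_iter sigma_ribbon Ta_tree) // (pos_tree_lt sigma_ribbon Tb_tree).
lia.
Qed.

Lemma pos_d : pa d = k.
Proof. exact: (pos_tree_iter sigma_ribbon Ta_tree s k_lt). Qed.

Lemma pos_alpha_d : k < pa (alpha d).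
Proof.
have := pos_alpha_neq sigma_ribbon Ta_tree s d; rewrite pos_d => Hne.
rewrite ltn_neqAle Hne /= leqNgt; apply/negP => /mem_prefix.
by rewrite /= (negbTE d_Tb) d_Ta.
Qed.

Local Notation W := (cut_side ends Ta d).

Lemma mem_W z : (tl z \in W) = (k < pa z <= pa (alpha d)).
Proof.
rewrite (mem_cut_side sigma_ribbon Ta_tree z d_Ta).
have Hk : k <= N by lia.
rewrite /d !(pos_tree_iter_start sigma_ribbon Ta_tree s z Hk).
rewrite (pos_tree_iter_start sigma_ribbon Ta_tree s (alpha d) Hk) -/d.
have H1 := pos_tree_lt sigma_ribbon Ta_tree s z.
have H2 := pos_tree_lt sigma_ribbon Ta_tree s (alpha d); have H3 := pos_alpha_d.
by case: (leqP k (pa z)) => h1; case: (leqP k (pa (alpha d))) => h2; apply/idP/idP; lia.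
Qed.

Lemma tail_d_notin_W : tl d \notin W.
Proof. by rewrite mem_W pos_d ltnn. Qed.

Lemma tail_alpha_d_in_W : tl (alpha d) \in W.
Proof. by rewrite mem_W pos_alpha_d leqnn. Qed.

Lemma crossing_notin_Ta g : touches W g -> ~~ inside W g -> g != d.1 -> g \notin Ta.
Proof.
move=> Ht Hi Hgd; apply/negP => gT.
have E1 := cut_side_tree_edge ends d_Ta gT Hgd.
by move: Ht Hi; rewrite /touches /inside E1 orbb andbb => ->.
Qed.

Lemma crossing_seen_or_eta z : tl z \in W -> tl (alpha z) \notin W -> z.1 != d.1 ->
  (pa (alpha z) < k) || (eta_from Ta s z.1 \in W).
Proof.
move=> H1 H2 Hz; move: (H1) (H2); rewrite (mem_W z) (mem_W (alpha z)) => /andP [A1 A2] A3.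
have Hne : pa (alpha z) != k.
  apply/negP => /eqP Hp.
  have /(pos_inj Ta_cyclic) Hzd : pa (alpha z) = pa d by rewrite Hp pos_d.
  by move: Hz; rewrite -Hzd eqxx.
case: (ltnP (pa (alpha z)) k) => Hl //; apply/orP; right.
have Hlt : pa z < pa (alpha z) by move: A3 Hne; rewrite negb_and -leqNgt -ltnNge; lia.
by rewrite (eta_first sigma_ribbon Ta_tree Hlt).
Qed.

Lemma crossing_seen_eta_Tb z :
  tl z \in W -> tl (alpha z) \notin W -> z.1 != d.1 -> pa (alpha z) < k ->
  (z.1 \notin Tb) && (eta_from Tb s z.1 \notin W).
Proof.
move=> H1 H2 Hz Hl.
have Hta : z.1 \notin Ta.
  apply: crossing_notin_Ta => //; first by rewrite touches_dart H1.
  by rewrite inside_dart (negbTE H2) andbF.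
rewrite -(mem_prefix Hl) Hta /=.
have A1 : k < pa z by move: H1; rewrite mem_W => /andP [].
have B1 := pos_after_prefix A1; have B2 := pos_prefix (ltnW Hl).
have Hlt : pb (alpha z) < pb (alpha (alpha z)) by rewrite alphaK B2; lia.
by rewrite [z.1]/((alpha z).1) (eta_first sigma_ribbon Tb_tree Hlt).
Qed.

Lemma eta_Tb_d : eta_from Tb s d.1 = tl d.
Proof.
apply: (eta_first sigma_ribbon Tb_tree).
by rewrite (pos_prefix (_ : pa d <= k)) ?pos_d //; apply: pos_after_prefix pos_alpha_d.
Qed.

(* [d.1] and the edges crossing out of [W] whose outer dart precedes [d]:
   their first-cut endpoint lies in [W] for [Ta] but not for [Tb]. *)
Definition early_crossing (g : E) : bool :=
  (g == d.1) || [&& touches W g, ~~ inside W g & (pa (g, true) < k) || (pa (g, false) < k)].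

Lemma early_crossing_Tb g : early_crossing g -> (g \notin Tb) && (eta_from Tb s g \notin W).
Proof.
case: (eqVneq g d.1) => [-> _ | Hgd]; first by rewrite eta_Tb_d d_Tb tail_d_notin_W.
rewrite /early_crossing (negbTE Hgd) orFb => /and3P [Ht Hi Hp].
case: (boolP (tl (g, true) \in W)) => H1.
  have H2 : tl (alpha (g, true)) \notin W by move: Hi; rewrite (inside_dart ends _ (g, true)) H1.
  apply: (crossing_seen_eta_Tb H1 H2 Hgd).
  by move: (H1); rewrite mem_W => /andP [A1 _]; move: Hp => /orP [] //; lia.
have H1' : tl (g, false) \in W by move: Ht; rewrite (touches_dart ends _ (g, true)) (negbTE H1).
apply: (crossing_seen_eta_Tb (z := (g, false)) H1' H1 Hgd).
by move: (H1'); rewrite mem_W => /andP [A1 _]; move: Hp => /orP [] //; lia.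
Qed.

Lemma touches_W_Ta g : touches W g ->
  [|| (g \notin Ta) && (eta_from Ta s g \in W), (g \in Ta) && inside W g | early_crossing g].
Proof.
move=> Ht; case: (boolP (inside W g)) => Hi.
  case: (boolP (g \in Ta)) => gT; first by rewrite orbT.
  by rewrite (inside_eta sigma_ribbon s Ta_tree Hi).
case: (eqVneq g d.1) => [Hg | Hgd]; first by rewrite /early_crossing Hg eqxx !orbT.
have gT := crossing_notin_Ta Ht Hi Hgd.
have Hearly : (pa (g, true) < k) || (pa (g, false) < k) -> early_crossing g.
  by move=> H; rewrite /early_crossing Ht Hi H orbT.
case: (boolP (tl (g, true) \in W)) => H1.
  have H2 : tl (alpha (g, true)) \notin W by move: Hi; rewrite (inside_dart ends _ (g, true)) H1.
  case/orP: (crossing_seen_or_eta H1 H2 Hgd) => [Hl | He]; last by rewrite gT He.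
  by rewrite Hearly ?orbT //; apply/orP; right.
have H1' : tl (g, false) \in W by move: Ht; rewrite (touches_dart ends _ (g, true)) (negbTE H1).
case/orP: (crossing_seen_or_eta (z := (g, false)) H1' H1 Hgd) => [Hl | He]; last by rewrite gT He.
by rewrite Hearly ?orbT //; apply/orP; left.
Qed.

Lemma touches_W_Tb g :
  ((g \notin Tb) && (eta_from Tb s g \in W)) + ((g \in Tb) && touches W g) + early_crossing g
  <= touches W g.
Proof.
case Hec: (early_crossing g).
  have /andP [nTb nW] := early_crossing_Tb Hec.
  rewrite (negbTE nW) (negbTE nTb) andbF /=.
  case/orP: Hec => [/eqP -> | /and3P [-> _ _] //].
  by rewrite (touches_dart ends _ d) tail_alpha_d_in_W orbT.
rewrite addn0; case: (boolP (g \in Tb)) => gTb /=; first by case: touches.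
by case: (boolP (eta_from Tb s g \in W)) => //= /(eta_touches sigma_ribbon Tb_tree) ->.
Qed.

Lemma first_divergence_false : False.
Proof.
have SA : \sum_g touches W g <= \sum_g (((g \notin Ta) && (eta_from Ta s g \in W))
                  + ((g \in Ta) && inside W g) + early_crossing g).
  apply: leq_sum => g _; have := @touches_W_Ta g.
  by case: (touches W g); case: (_ && _); case: (_ && _); case: (early_crossing g) => // /(_ isT).
have SB : \sum_g (((g \notin Tb) && (eta_from Tb s g \in W))
                  + ((g \in Tb) && touches W g) + early_crossing g) <= \sum_g touches W g.
  by apply: leq_sum => g _; apply: touches_W_Tb.
rewrite !big_split /= in SA SB.
have EqAB : \sum_g ((g \notin Ta) && (eta_from Ta s g \in W)) =
            \sum_g ((g \notin Tb) && (eta_from Tb s g \in W)).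
  have : (\sum_(x in W) bernardi_from Ta s x = \sum_(x in W) bernardi_from Tb s x)%R.
    by apply: eq_bigr => x _; apply: bernardi_eq.
  rewrite !sum_bernardi_from -!(big_morph Posz PoszD (erefl (Posz 0))).
  by case.
have C1 := card_set_sum [pred g | (g \in Tb) && touches W g].
have C2 := card_set_sum [pred g | (g \in Ta) && inside W g].
have T1 := card_touching_edges (proj1 Tb_tree) tail_d_notin_W.
have T2 := card_inside_tree_edges sigma_ribbon s Ta_tree tail_alpha_d_in_W.
move: SA SB EqAB C1 C2 T1 T2 => /=; lia.
Qed.

End FirstDivergence.

Lemma bernardi_from_inj (V E : finType) (ends : E -> V * V) (sigma : {perm dart E})
  (T T' : {set E}) (s : dart E) :
  ribbon ends sigma -> spanning_tree ends T -> spanning_tree ends T' ->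
  (forall u, bernardi_from ends sigma T s u = bernardi_from ends sigma T' s u) -> T = T'.
Proof.
move=> Hrib HT HT' Heq.
pose P k := (k < #|{: dart E}|) && (((iter k (tour_perm sigma T) s).1 \in T) !=
                                     ((iter k (tour_perm sigma T) s).1 \in T')).
case: (boolP [exists i : 'I_#|{: dart E}|, P i]) => [/existsP [i Hi] | Hn]; last first.
  apply/setP => g; have Hl := pos_tree_lt Hrib HT s (g, true).
  move: Hn; rewrite negb_exists => /forallP /(_ (Ordinal Hl)).
  by rewrite /P /= Hl /= (iter_pos (tour_perm_cyclic Hrib HT)) => /negPn /eqP.
have [k /andP [Hk Hdiff] Hmin] := ex_minnP (ex_intro P i Hi).
have Hpre j : j < k ->
    ((iter j (tour_perm sigma T) s).1 \in T) = ((iter j (tour_perm sigma T) s).1 \in T').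
  move=> Hj; apply/eqP/negPn/negP => Hd; suff : k <= j by lia.
  by apply: Hmin; rewrite /P Hd andbT; lia.
case: (boolP ((iter k (tour_perm sigma T) s).1 \in T)) => HinT.
  have HnT' : (iter k (tour_perm sigma T) s).1 \notin T'.
    by move: Hdiff; rewrite HinT; case: (_ \in _).
  by case: (first_divergence_false Hrib HT HT' Hk Hpre HinT HnT' Heq).
have HinT' : (iter k (tour_perm sigma T) s).1 \in T'.
  by move: Hdiff; rewrite (negbTE HinT); case: (_ \in _).
have Hiter := iter_tour_prefix Hpre.
have Hpre' j : j < k ->
    ((iter j (tour_perm sigma T') s).1 \in T') = ((iter j (tour_perm sigma T') s).1 \in T).
  by move=> Hj; rewrite Hiter ?(ltnW Hj) // Hpre.
have Hfa : (iter k (tour_perm sigma T') s).1 \in T' by rewrite Hiter.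
have Hfb : (iter k (tour_perm sigma T') s).1 \notin T by rewrite Hiter.
by case: (first_divergence_false Hrib HT' HT Hk Hpre' Hfa Hfb (fun u => esym (Heq u))).
Qed.

Theorem theorem5p1 (V E : finType) (ends : E -> V * V) (sigma : {perm dart E})
  (Hloop : loopless ends) (Hconn : connected_graph ends)
  (Hrib : ribbon ends sigma) (Hplanar : planar V sigma) :
  forall (v v' : V) (e e' : E), incident ends v e -> incident ends v' e' ->
  forall (gamma : divisor V), deg gamma = 0%R ->
  forall T T1 T2 : {set E},
    spanning_tree ends T -> spanning_tree ends T1 -> spanning_tree ends T2 ->
    beta_act ends sigma v e gamma T T1 ->
    beta_act ends sigma v' e' gamma T T2 ->
    T1 = T2.
Proof.
move=> v v' e e' _ _ gamma _ T T1 T2 HT HT1 HT2 [f1 Hf1] [f2 Hf2].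
rewrite /add_div !bernardi_start in Hf1 Hf2.
set s := start_dart ends v e in Hf1; set s' := start_dart ends v' e' in Hf2.
have [h Hh] := start_equiv_all Hrib Hloop Hplanar Hconn s s' HT1 HT.
apply: (bernardi_from_inj (s := s') Hrib HT1 HT2).
apply: (bernardi_from_lin_equiv Hrib Hloop HT1 HT2).
exists (fun x => f1 x - h x - f2 x)%R => u.
by rewrite !laplacianB -Hh -Hf1 -Hf2; ring.
Qed.
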